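(* For a poset $P$ on $\{1,2,\ldots,n\}$ and field $k$, the following are equivalent: (i) $I^{\mathfrak{gr}}_P=I_P$ and $\mathfrak{gr}(R_P)\cong R_P$; (ii) the toric ideal $I_P=\ker(\varphi:S\to R_P)$ is homogeneous for the standard $\mathbb{N}$-grading of $S$ in which each $U_J$ has degree one; (iii) every pair $\{J_1,J_2\}$ of connected order ideals of $P$ that intersects nontrivially has $J_1\cap J_2$ connected.
   Context: All posets are finite. A weak $P$-partition is $f:\{1,\ldots,n\}\to\mathbb{N}$ with $f(i)\ge f(j)$ whenever $i<_Pj$; $R_P\subseteq k[x_1,\ldots,x_n]$ is the span of $\mathbf{x}^f=\prod_ix_i^{f(i)}$ over weak $P$-partitions; $\mathfrak{m}$ is spanned by the $\mathbf{x}^f$ with $f\ne0$; $\mathfrak{gr}(R_P)=\bigoplus_i\mathfrak{m}^i/\mathfrak{m}^{i+1}$. A connected order ideal is a nonempty downward-closed subset whose induced Hasse diagram is connected; $\mathcal{J}_{\mathrm{conn}}(P)$ is the set of these; two of them intersect nontrivially if neither disjoint nor nested; $\Pi(P)$ is the set of such pairs. $S=k[U_J]_{J\in\mathcal{J}_{\mathrm{conn}}(P)}$; $\varphi:S\to R_P$, $U_J\mapsto\prod_{j\in J}x_j$, and $\mathfrak{gr}(\varphi):S\to\mathfrak{gr}(R_P)$ sends $U_J$ to the class of $\prod_{j\in J}x_j$ in $\mathfrak{m}/\mathfrak{m}^2$. $I_P=\ker\varphi$ is generated by $U_{J_1}U_{J_2}-U_{J_1\cup J_2}U_{J^{(1)}}\cdots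 U_{J^{(t)}}$ ($\{J_1,J_2\}\in\Pi(P)$, $J^{(1)},\ldots,J^{(t)}$ the connected components of $J_1\cap J_2$), and $I^{\mathfrak{gr}}_P=\ker\mathfrak{gr}(\varphi)$ is generated by $U_{J_1}U_{J_2}-U_{J_1\cup J_2}U_{J_1\cap J_2}$ when $J_1\cap J_2$ is connected and $U_{J_1}U_{J_2}$ when disconnected, over $\{J_1,J_2\}\in\Pi(P)$. *)

From HB Require Import structures.
From mathcomp Require Import all_boot all_order all_algebra.
From mathcomp Require Import fingraph.
From mathcomp.multinomials Require Import mpoly.

Set Implicit Arguments.
Unset Strict Implicit.
Unset Printing Implicit Defensive.

Import Order.TTheory GRing.Theory.
Local Open Scope ring_scope.

(* Posets on {0,...,n-1} (= {1,...,n} shifted) given by a relation le. *)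

Section Poset.
Variables (n : nat) (le : rel 'I_n).

Definition plt (i j : 'I_n) : bool := le i j && (i != j).

Definition pcover (i j : 'I_n) : bool :=
  plt i j && [forall k, ~~ (plt i k && plt k j)].

Definition hasse_on (J : {set 'I_n}) : rel 'I_n :=
  fun x y => [&& x \in J, y \in J & pcover x y || pcover y x].

Definition hasse_connected (J : {set 'I_n}) : bool :=
  [forall x in J, forall y in J, connect (hasse_on J) x y].

Definition order_ideal (J : {set 'I_n}) : bool :=
  [forall x, forall y, (le x y && (y \in J)) ==> (x \in J)].

Definition conn_ideal (J : {set 'I_n}) : bool :=
  [&& J != set0, order_ideal J & hasse_connected J].

Definition intersect_nontriv (J1 J2 : {set 'I_n}) : bool :=
  [&& ~~ [disjoint J1 & J2], ~~ (J1 \subset J2) & ~~ (J2 \subset J1)].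

(* the list of all connected order ideals; U_J is the variable of index
   i where J = nth set0 cideals i *)
Definition cideals : seq {set 'I_n} := [seq J <- enum {set 'I_n} | conn_ideal J].
Definition ncid : nat := size cideals.

(* weak P-partitions, viewed as exponent vectors *)
Definition wpp (f : 'X_{1..n}) : bool :=
  [forall i, forall j, plt i j ==> (f j <= f i)%N].

Variable k : fieldType.

(* R_P : the k-span of the monomials x^f, f a weak P-partition *)
Definition inRP (p : {mpoly k[n]}) : Prop :=
  exists s : seq (k * 'X_{1..n}),
    (forall x, x \in s -> wpp x.2) /\ p = \sum_(x <- s) x.1 *: 'X_[x.2].

(* the ideal m : the k-span of the x^f with f <> 0 a weak P-partition *)
Definition inM (p : {mpoly k[n]}) : Prop :=
  exists s : seq (k * 'X_{1..n}),
    (forall x, x \in s -> wpp x.2 /\ x.2 != 0%MM) /\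
    p = \sum_(x <- s) x.1 *: 'X_[x.2].

Fixpoint inMpow (d : nat) (p : {mpoly k[n]}) : Prop :=
  match d with
  | 0 => inRP p
  | d'.+1 => exists s : seq ({mpoly k[n]} * {mpoly k[n]}),
      (forall x, x \in s -> inM x.1 /\ inMpow d' x.2) /\
      p = \sum_(x <- s) x.1 * x.2
  end.

(* S = k[U_J] and phi : S -> R_P, U_J |-> prod_{j in J} x_j *)

Definition phi (q : {mpoly k[ncid]}) : {mpoly k[n]} :=
  mmap (fun c => c%:MP) (fun i : 'I_ncid => \prod_(j in nth set0 cideals i) 'X_j) q.

Definition inIP (q : {mpoly k[ncid]}) : Prop := phi q = 0.

Definition hcomp (d : nat) (q : {mpoly k[ncid]}) : {mpoly k[ncid]} :=
  pihomog (Measure.clone _ mdeg _) d q.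

(* The associated graded ring gr(R_P) = (+)_d m^d / m^(d+1), presented as
   a setoid: an element is a finite sequence a with a_d in m^d
   (a representative of the degree-d component), two such are equal iff
   a_d - b_d in m^(d+1) for every d. *)

Definition gr_valid (a : seq {mpoly k[n]}) : Prop :=
  forall d, inMpow d (nth 0 a d).

Definition gr_eq (a b : seq {mpoly k[n]}) : Prop :=
  forall d, inMpow d.+1 (nth 0 a d - nth 0 b d).

Definition gr_add (a b : seq {mpoly k[n]}) : seq {mpoly k[n]} :=
  mkseq (fun d => nth 0 a d + nth 0 b d) (maxn (size a) (size b)).

Definition gr_mul (a b : seq {mpoly k[n]}) : seq {mpoly k[n]} :=
  mkseq (fun d => \sum_(i < d.+1) nth 0 a i * nth 0 b (d - i))
        (size a + size b).

Definition gr_scale (c : k) (a : seq {mpoly k[n]}) : seq {mpoly k[n]} :=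
  map (fun x => c *: x) a.

Definition gr_one : seq {mpoly k[n]} := [:: 1].

(* gr(phi) : S -> gr(R_P), the k-algebra map sending U_J to the class of
   prod_{j in J} x_j in m/m^2; on q it sends the degree-d component q_d
   of q to the class of phi(q_d) in m^d/m^(d+1). *)
Definition grphi (q : {mpoly k[ncid]}) : seq {mpoly k[n]} :=
  mkseq (fun d => phi (hcomp d q)) (msize q).

Definition inIgr (q : {mpoly k[ncid]}) : Prop := gr_eq (grphi q) [::].

Definition gr_iso_RP : Prop :=
  exists f : {mpoly k[n]} -> seq {mpoly k[n]},
    (forall p, inRP p -> gr_valid (f p)) /\
    (forall p q, inRP p -> inRP q -> gr_eq (f (p + q)) (gr_add (f p) (f q))) /\
    (forall c p, inRP p -> gr_eq (f (c *: p)) (gr_scale c (f p))) /\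
    (forall p q, inRP p -> inRP q -> gr_eq (f (p * q)) (gr_mul (f p) (f q))) /\
    gr_eq (f 1) gr_one /\
    (forall p q, inRP p -> inRP q -> gr_eq (f p) (f q) -> p = q) /\
    (forall a, gr_valid a -> exists2 p, inRP p & gr_eq (f p) a).

End Poset.

(* Give each x in P the weight w(x) = 1 - (number of connected components of
   the strict down-set of x), and each weak P-partition f the P-degree
   λ(f) = Σ_x f(x) w(x).  If nontrivially intersecting connected order ideals
   meet in a connected set, λ(1_J) counts the connected components of every
   order ideal J: removing a maximal element x of a connected J, the
   components of J - x correspond to those of the strict down-set of x, by
   the hypothesis applied to a component and the principal ideal of x.  So
   λ(1_J) = 1 for connected J, and since every weak P-partition is a sum of
   indicators of connected order ideals, λ(exponent of φ(U^u)) = deg u.  Thus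
   λ grades R_P compatibly with S: I_P is homogeneous and equals I^gr_P,
   m^d is spanned by the monomials of λ-degree at least d, and splitting into
   λ-homogeneous parts identifies R_P with gr(R_P).
   Conversely, if J1 ∩ J2 = C ⊔ D' with C a component, then
   U_J1 U_J2 - U_(J1 ∪ J2) U_C U^v with φ(U^v) = x^D' lies in I_P but its
   degree-2 part does not. *)

From Pilot Require Import Defs.
From HB Require Import structures.
From mathcomp Require Import all_boot all_order all_algebra.
From mathcomp.multinomials Require Import mpoly.
From mathcomp Require Import zify.

Set Implicit Arguments.
Unset Strict Implicit.
Unset Printing Implicit Defensive.
Import GRing.Theory.

Lemma card_imset_fibers (T U : finType) (f : T -> U) (A : {set T}) :
  #|f @: A| = #|[set [set b in A | f b == f a] | a in A]|.
Proof.
rewrite (imset_comp (fun u => [set b in A | f b == u]) f) [RHS]card_in_imset //.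
move=> _ _ /imsetP[a aA ->] /imsetP[b bA ->] /setP /(_ a).
by rewrite !inE aA eqxx => /esym /eqP.
Qed.

Lemma card_imset_eqker (T U V : finType) (f : T -> U) (g : T -> V) (A : {set T}) :
  {in A &, forall a b, (f a == f b) = (g a == g b)} -> #|f @: A| = #|g @: A|.
Proof.
move=> fg; rewrite card_imset_fibers [RHS]card_imset_fibers.
apply: eq_card => S.
by apply/imsetP/imsetP => -[a aA ->]; exists a => //; apply/setP => b;
  rewrite !inE; apply: andb_id2l => bA; rewrite fg.
Qed.

Lemma mnm_pos (N : nat) (m : 'X_{1..N}) : m != 0%MM -> exists i, (0 < m i)%N.
Proof.
move=> nm; apply/existsP; apply: contraR nm => /existsPn m0.
by apply/eqP/mnmP => i; rewrite mnm0E; apply/eqP; rewrite -leqn0 leqNgt m0.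
Qed.

Section HasseConnectivity.
Variables (n : nat) (le : rel 'I_n).
Hypotheses (le_refl : reflexive le) (le_anti : antisymmetric le)
  (le_trans : transitive le).
Implicit Types (A B D J K : {set 'I_n}) (x y z t : 'I_n).

Local Notation plt := (plt le).
Local Notation order_ideal := (order_ideal le).
Local Notation hasse_connected := (hasse_connected le).

Local Notation hconnect D := (connect (hasse_on le D)).

Lemma hasse_on_sym D : ssrbool.symmetric (hasse_on le D).
Proof. by move=> x y; rewrite /hasse_on andbCA orbC. Qed.

Lemma hconnect_sym D : connect_sym (hasse_on le D).
Proof. exact/sym_connect_sym/hasse_on_sym. Qed.

Lemma hconnect_subset A B x y : A \subset B -> hconnect A x y -> hconnect B x y.
Proof.
move=> /subsetP AB; apply: connect_sub => u v /and3P[uA vA cuv].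
by apply: connect1; rewrite /hasse_on AB ?AB.
Qed.

Lemma hasse_connectedP D :
  reflect {in D &, forall x y, hconnect D x y} (hasse_connected D).
Proof.
apply: (iffP forall_inP) => [cD x y xD yD | cD x xD].
  by move/forall_inP: (cD x xD); apply.
by apply/forall_inP => y; apply: cD.
Qed.

Lemma order_idealP D :
  reflect (forall x y, le x y -> y \in D -> x \in D) (order_ideal D).
Proof.
apply: (iffP forallP) => [iD x y lxy yD | iD x].
  by move/forallP: (iD x) => /(_ y); rewrite lxy yD.
by apply/forallP => y; apply/implyP => /andP[]; apply: iD.
Qed.

Lemma pltW x y : plt x y -> le x y.
Proof. by case/andP. Qed.

Lemma le_le_eq x y : le x y -> le y x -> x = y.
Proof. by move=> lxy lyx; apply: le_anti; rewrite lxy lyx. Qed.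

Lemma plt_trans x y z : plt x y -> le y z -> plt x z.
Proof.
move=> /andP[lxy nxy] lyz; rewrite /plt (le_trans lxy lyz).
by apply: contra nxy => /eqP exz; rewrite exz in lxy *; rewrite (le_le_eq lxy lyz).
Qed.

Let interval x y := [set t | plt x t & le t y].

Lemma interval_ltl x t y : plt x t -> le t y -> #|interval t y| < #|interval x y|.
Proof.
move=> pxt lty; apply/proper_card/properP; split.
  by apply/subsetP => s; rewrite !inE => /andP[pts ->]; rewrite (plt_trans pxt (pltW pts)).
by exists t; rewrite !inE ?pxt ?lty // /plt eqxx andbF.
Qed.

Lemma interval_ltr x t y : plt x t -> plt t y -> #|interval x t| < #|interval x y|.
Proof.
move=> pxt pty; apply/proper_card/properP; split.
  by apply/subsetP => s; rewrite !inE => /andP[-> lst]; rewrite (le_trans lst (pltW pty)).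
exists y; first by rewrite !inE (plt_trans pxt (pltW pty)) le_refl.
rewrite inE negb_and; apply/orP; right; apply/negP => lyt.
by case/andP: pty => lty; rewrite (le_le_eq lty lyt) eqxx.
Qed.

(* Induction on the size of [interval x y]: either [y] covers [x], or an
   intermediate element splits the interval into two smaller ones. *)
Lemma hconnect_le D x y : order_ideal D -> y \in D -> le x y -> hconnect D x y.
Proof.
move=> /order_idealP iD; elim: {x y}_.+1 {-2}x {-2}y (ltnSn #|interval x y|) => // N IH x y.
rewrite ltnS => leN yD lxy; have [<-|nxy] := eqVneq x y; first exact: connect0.
have pxy : plt x y by rewrite /plt lxy nxy.
have [covxy|] := boolP [forall t, ~~ (plt x t && plt t y)].
  by apply: connect1; rewrite /hasse_on (iD _ _ lxy yD) yD /pcover pxy covxy.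
rewrite negb_forall => /existsP[t]; rewrite negbK => /andP[pxt pty].
apply: (connect_trans (y := t)).
  apply: IH (iD _ _ (pltW pty) yD) (pltW pxt).
  exact: leq_trans (interval_ltr pxt pty) leN.
by apply: IH yD (pltW pty); exact: leq_trans (interval_ltl pxt (pltW pty)) leN.
Qed.

Definition component D y := [set z in D | hconnect D y z].
Definition components D := equivalence_partition (hconnect D) D.
Definition ncomp D := #|components D|.

Lemma hconnect_equiv D : {in D & &, equivalence_rel (hconnect D)}.
Proof.
move=> x y z _ _ _; split=> [|cxy]; first exact: connect0.
by apply/idP/idP; apply: connect_trans; rewrite // hconnect_sym.
Qed.

Lemma components_partition D : partition (components D) D.
Proof. exact: equivalence_partitionP (@hconnect_equiv D). Qed.

Lemma components_imset D : components D = component D @: D.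
Proof. by []. Qed.

Lemma component_sub D y : component D y \subset D.
Proof. by apply/subsetP => z; rewrite inE => /andP[]. Qed.

Lemma mem_component D y : y \in D -> y \in component D y.
Proof. by move=> yD; rewrite inE yD; apply: connect0. Qed.

Lemma eq_component D x y : x \in D -> y \in D ->
  (component D x == component D y) = hconnect D x y.
Proof.
move=> xD yD; apply/eqP/idP => [exy | cxy].
  by have := mem_component yD; rewrite -exy inE => /andP[].
apply/setP => z; rewrite !inE; apply: andb_id2l => zD.
by apply/idP/idP; apply: connect_trans; rewrite // hconnect_sym.
Qed.

Lemma component_ideal D y : order_ideal D -> y \in D -> order_ideal (component D y).
Proof.
move=> iD yD; apply/order_idealP => a b lab; rewrite !inE => /andP[bD cyb].
have aD : a \in D by move/order_idealP: iD => /(_ a b lab bD).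
by rewrite aD (connect_trans cyb) // hconnect_sym hconnect_le.
Qed.

Lemma hconnect_component D y x z : x \in component D y -> hconnect D x z ->
  hconnect (component D y) x z.
Proof.
move=> xC /connectP[p hp ->] {z}; elim: p x xC hp => [|v p IHp] x xC /=.
  by move=> _; apply: connect0.
case/andP=> hxv hp; have [_ vD _] := and3P hxv.
have vC : v \in component D y.
  by move: xC; rewrite !inE vD => /andP[_ cyx]; apply: connect_trans cyx (connect1 _).
apply: (connect_trans (y := v) (connect1 _)); last exact: IHp.
by case/and3P: hxv => _ _ cxv; rewrite /hasse_on xC vC.
Qed.

Lemma component_connected D y : hasse_connected (component D y).
Proof.
apply/hasse_connectedP => a b aC bC; apply: (hconnect_component aC).
move: aC bC; rewrite !inE => /andP[_ cya] /andP[_ cyb].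
by apply: connect_trans cyb; rewrite hconnect_sym.
Qed.

Lemma component_conn_ideal D y : order_ideal D -> y \in D ->
  conn_ideal le (component D y).
Proof.
move=> iD yD; rewrite /conn_ideal component_ideal ?component_connected ?andbT //.
by apply/set0Pn; exists y; apply: mem_component.
Qed.

Lemma ncomp_connected D : hasse_connected D -> D != set0 -> ncomp D = 1.
Proof.
move=> /hasse_connectedP cD /set0Pn[y yD]; rewrite /ncomp components_imset.
suff -> : component D @: D = [set D] by rewrite cards1.
apply/setP => C; rewrite !inE; apply/imsetP/eqP => [[x xD ->] | ->].
  by apply/setP => z; rewrite inE; apply: andb_idr; apply: cD.
by exists y => //; apply/setP => z; rewrite inE; apply/esym/andb_idr; apply: cD.
Qed.

Definition downset x := [set t | le t x].
Definition sdownset x := [set t | plt t x].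

Lemma downset_conn_ideal x : conn_ideal le (downset x).
Proof.
have iB : order_ideal (downset x).
  by apply/order_idealP => a b lab; rewrite !inE; apply: le_trans.
have xB : x \in downset x by rewrite inE le_refl.
rewrite /conn_ideal iB /=; apply/andP; split; first by apply/set0Pn; exists x.
apply/hasse_connectedP => a b; rewrite !inE => lax lbx.
by apply: (connect_trans (y := x)); last rewrite hconnect_sym; apply: hconnect_le.
Qed.

Lemma exists_maximal D : D != set0 ->
  exists2 x, x \in D & forall z, z \in D -> le x z -> z = x.
Proof.
case/set0Pn => x0 x0D.
have [x xD xmax] := @arg_maxnP _ x0 (mem D) (fun x => #|downset x|) x0D.
exists x => // z zD lxz; apply/eqP/negPn/negP => nzx.
have := xmax z zD; apply/negP; rewrite -ltnNge; apply/proper_card/properP; split.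
  by apply/subsetP => t; rewrite !inE => ltx; apply: le_trans ltx lxz.
by exists z; rewrite !inE ?le_refl //; apply: contra nzx => lzx; rewrite (le_le_eq lzx lxz).
Qed.

End HasseConnectivity.

Section ComponentCount.
Variables (n : nat) (le : rel 'I_n).
Hypotheses (le_refl : reflexive le) (le_anti : antisymmetric le)
  (le_trans : transitive le).
Implicit Types (D J K : {set 'I_n}) (x y z : 'I_n).

Local Notation order_ideal := (order_ideal le).
Local Notation hasse_connected := (hasse_connected le).
Local Notation hconnect D := (connect (hasse_on le D)).
Local Notation component := (component le).
Local Notation ncomp := (ncomp le).
Local Notation sdownset := (sdownset le).

Definition weight x : int := (1 - (ncomp (sdownset x))%:Z)%R.
Definition weight_sum D : int := (\sum_(x in D) weight x)%R.

Lemma weight_sum_components D :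
  weight_sum D = (\sum_(C in components le D) weight_sum C)%R.
Proof. exact: set_partition_big (components_partition le D). Qed.

Section Maximal.
Variables (D : {set 'I_n}) (x : 'I_n).
Hypotheses (iD : order_ideal D) (xD : x \in D)
  (xmax : forall z, z \in D -> le x z -> z = x).

Lemma order_ideal_setD1 : order_ideal (D :\ x).
Proof.
apply/order_idealP => a b lab; rewrite !inE => /andP[nbx bD].
rewrite (order_idealP _ _ iD a b lab bD) andbT.
by apply: contra nbx => /eqP eax; rewrite eax in lab; rewrite (xmax bD lab).
Qed.

Lemma sdownset_sub_setD1 : sdownset x \subset D :\ x.
Proof.
apply/subsetP => t; rewrite !inE => /andP[ltx ntx].
by rewrite ntx (order_idealP _ _ iD t x ltx xD).
Qed.

(* A Hasse path from [z] to [x] inside [D] reaches [x] from below, since [x]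
   is maximal. *)
Lemma hconnect_sdownset z : hasse_connected D -> z \in D :\ x ->
  exists2 c, c \in sdownset x & hconnect (D :\ x) z c.
Proof.
move=> /hasse_connectedP cD zDx; have /cD /(_ xD) : z \in D by case/setD1P: zDx.
case/connectP=> p; elim: p z zDx => [|y p IHp] z zDx /=.
  by move=> _ ezx; move: zDx; rewrite ezx setD11.
case/andP=> hzy hp lp; have [_ yD czy] := and3P hzy.
have [eyx|nyx] := eqVneq y x.
  exists z; last exact: connect0.
  case/orP: czy; rewrite eyx => /andP[/andP[lzx nzx] _]; first by rewrite inE /plt lzx nzx.
  by case/setD1P: zDx => nzx' zD; rewrite (xmax zD lzx) eqxx in nzx'.
have yDx : y \in D :\ x by apply/setD1P.
have [c cx cyc] := IHp y yDx hp lp; exists c => //.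
by apply: connect_trans cyc; apply: connect1; rewrite /hasse_on zDx yDx.
Qed.

End Maximal.

Hypothesis meet_connected : forall J1 J2, conn_ideal le J1 -> conn_ideal le J2 ->
  intersect_nontriv J1 J2 -> hasse_connected (J1 :&: J2).

(* The component of [a] in [D] meets [downset x] in a connected set, by the
   hypothesis on intersections, and that set avoids [x]. *)
Lemma hconnect_in_sdownset D x a b : order_ideal D -> sdownset x \subset D ->
  x \notin D -> a \in sdownset x -> b \in sdownset x -> hconnect D a b ->
  hconnect (sdownset x) a b.
Proof.
move=> iD /subsetP sxD xD ax bx cab.
set K := component D a.
have aK : a \in K by apply/mem_component/sxD.
have bK : b \in K by rewrite inE sxD.
have cK : conn_ideal le K by apply: component_conn_ideal; rewrite ?sxD.
have axB : a \in K :&: downset le x.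
  by rewrite in_setI aK inE; apply: pltW; move: ax; rewrite inE.
have bxB : b \in K :&: downset le x.
  by rewrite in_setI bK inE; apply: pltW; move: bx; rewrite inE.
have KxB : K :&: downset le x \subset sdownset x.
  apply/subsetP => t; rewrite !inE => /andP[/andP[tD _] ltx]; rewrite /plt ltx.
  by apply: contraNneq xD => <-.
suff /hasse_connectedP cKx : hasse_connected (K :&: downset le x).
  exact: hconnect_subset KxB (cKx a b axB bxB).
have [KsB|KnB] := boolP (K \subset downset le x).
  by rewrite (setIidPl KsB); case/and3P: cK.
apply: meet_connected cK (downset_conn_ideal le_refl le_anti le_trans x) _.
rewrite /intersect_nontriv KnB -setI_eq0 /=; apply/andP; split.
  by apply/set0Pn; exists a.
apply/subsetPn; exists x; first by rewrite inE le_refl.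
by apply: contra xD => /(subsetP (component_sub le D a)).
Qed.

Lemma ncomp_setD1_maximal D x : order_ideal D -> hasse_connected D -> x \in D ->
  (forall z, z \in D -> le x z -> z = x) -> ncomp (D :\ x) = ncomp (sdownset x).
Proof.
move=> iD cD xD xmax; have /subsetP sxD := sdownset_sub_setD1 iD xD.
have iDx := order_ideal_setD1 iD xmax; have xDx : x \notin D :\ x by rewrite setD11.
rewrite /ncomp !components_imset.
have -> : component (D :\ x) @: (D :\ x) = component (D :\ x) @: sdownset x.
  apply/setP => C; apply/imsetP/imsetP => [[z zDx ->] | [c cx ->]]; last first.
    by exists c; rewrite ?sxD.
  have [c cx czc] := hconnect_sdownset xD xmax cD zDx.
  by exists c => //; apply/eqP; rewrite eq_component // sxD.
apply: card_imset_eqker => a b ax bx; rewrite !eq_component ?sxD //.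
apply/idP/idP; last exact: hconnect_subset (sdownset_sub_setD1 iD xD).
by apply: hconnect_in_sdownset => //; apply/subsetP.
Qed.

Lemma weight_sum_ncomp D : order_ideal D -> weight_sum D = Posz (ncomp D).
Proof.
elim: {D}_.+1 {-2}D (ltnSn #|D|) => // N IH D; rewrite ltnS => leN iD.
have [->|nD] := eqVneq D set0.
  by rewrite /weight_sum big_set0 /ncomp components_imset imset0 cards0.
have [cD|ncD] := boolP (hasse_connected D).
  have [x xD xmax] := exists_maximal le_refl le_anti le_trans nD.
  have ltD1 : #|D :\ x| < #|D| by rewrite (cardsD1 x D) xD.
  rewrite ncomp_connected // /weight_sum (big_setD1 x xD) /= -/(weight_sum _).
  rewrite IH ?order_ideal_setD1 ?(leq_trans ltD1) //.
  by rewrite ncomp_setD1_maximal // /weight subrK.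
rewrite weight_sum_components /ncomp -[Posz #|_|]natz -sumr_const.
apply: eq_bigr => _ /imsetP[y yD ->].
have ltC : #|component D y| < #|D|.
  apply/proper_card; rewrite properEneq component_sub andbT.
  by apply: contraNneq ncD => <-; apply: component_connected.
rewrite IH ?component_ideal ?(leq_trans ltC) // ncomp_connected ?component_connected //.
by apply/set0Pn; exists y; apply: mem_component.
Qed.

Lemma weight_sum_conn_ideal J : conn_ideal le J -> weight_sum J = 1%R.
Proof. by case/and3P=> nJ iJ cJ; rewrite weight_sum_ncomp // ncomp_connected. Qed.

End ComponentCount.

Section ExponentVectors.
Variables (n : nat) (le : rel 'I_n).
Hypotheses (le_refl : reflexive le) (le_anti : antisymmetric le)
  (le_trans : transitive le).
Implicit Types (D J K : {set 'I_n}) (f g : 'X_{1..n}).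

Local Notation order_ideal := (order_ideal le).
Local Notation wpp := (wpp le).
Local Notation ncid := (ncid le).

Definition mset J : 'X_{1..n} := [multinom (i \in J : nat) | i < n].
Definition cideal (i : 'I_ncid) := nth set0 (cideals le) i.
(* [phi 'X_[u] = 'X_[phi_mnm u]], see [phiX]. *)
Definition phi_mnm (u : 'X_{1..ncid}) : 'X_{1..n} :=
  (\sum_(i < ncid) mset (cideal i) *+ u i)%MM.

Lemma msetE J i : mset J i = (i \in J). Proof. by rewrite mnmE. Qed.

Lemma mset_sum J : mset J = (\sum_(j in J) U_(j))%MM.
Proof.
apply/mnmP => i; rewrite msetE mnm_sumE big_mkcond (bigD1 i) //= mnm1E eqxx.
rewrite big1 ?addn0; first by case: (i \in J).
by move=> j nji; rewrite mnm1E (negbTE nji) if_same.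
Qed.

Lemma cideal_conn_ideal i : conn_ideal le (cideal i).
Proof. by have := mem_nth set0 (ltn_ord i); rewrite mem_filter => /andP[]. Qed.

Lemma cideal_surj J : conn_ideal le J -> exists i, cideal i = J.
Proof.
move=> cJ; have JC : J \in cideals le by rewrite mem_filter cJ mem_enum.
have ltJ : (index J (cideals le) < ncid)%N by rewrite index_mem.
by exists (Ordinal ltJ); rewrite /cideal nth_index.
Qed.

Lemma phi_mnmD u v : phi_mnm (u + v) = (phi_mnm u + phi_mnm v)%MM.
Proof.
rewrite /phi_mnm -big_split; apply: eq_bigr => i _.
by apply/mnmP => j; rewrite !(mnmDE, mulmnE) mulnDr.
Qed.

Lemma phi_mnm0 : phi_mnm 0 = 0%MM.
Proof. by rewrite /phi_mnm big1 // => i _; rewrite mnm0E mulm0n. Qed.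

Lemma phi_mnm1 i : phi_mnm U_(i) = mset (cideal i).
Proof.
rewrite /phi_mnm (bigD1 i) //= mnm1E eqxx mulm1n big1 ?addm0 //.
by move=> j nji; rewrite mnm1E eq_sym (negbTE nji) mulm0n.
Qed.

Lemma wppP f : reflect (forall i j, plt le i j -> f j <= f i)%N (wpp f).
Proof.
apply: (iffP forallP) => [wf i j pij | wf i].
  by move/forallP: (wf i) => /(_ j); rewrite pij.
by apply/forallP => j; apply/implyP; apply: wf.
Qed.

Lemma wpp0 : wpp 0%MM.
Proof. by apply/wppP => i j _; rewrite mnm0E. Qed.

Lemma wppD f g : wpp f -> wpp g -> wpp (f + g)%MM.
Proof.
move=> /wppP wf /wppP wg; apply/wppP => i j pij; rewrite !mnmDE.
exact: leq_add (wf _ _ pij) (wg _ _ pij).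
Qed.

Lemma wpp_mset J : order_ideal J -> wpp (mset J).
Proof.
move=> /order_idealP iJ; apply/wppP => i j pij; rewrite !msetE.
by case jJ : (j \in J); rewrite ?(iJ i j (pltW pij) jJ).
Qed.

Lemma wpp_phi_mnm u : wpp (phi_mnm u).
Proof.
apply: (big_ind wpp wpp0 wppD) => i _; elim: (u i) => [|k IHk].
  by rewrite mulm0n wpp0.
by rewrite mulmS wppD // wpp_mset //; case/and3P: (cideal_conn_ideal i).
Qed.

Lemma mdeg_mset J : mdeg (mset J) = #|J|.
Proof.
rewrite mdegE -sum1_card [RHS]big_mkcond /=; apply: eq_bigr => i _.
by rewrite msetE.
Qed.

Lemma order_ideal_support f : wpp f -> order_ideal [set i | 0 < f i]%N.
Proof.
move=> /wppP wf; apply/order_idealP => a b lab; rewrite !inE => fb.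
have [->//|nab] := eqVneq a b.
by apply: leq_trans fb (wf _ _ _); rewrite /plt lab nab.
Qed.

(* An element above a point of the component, where [f] is positive, lies in
   the component itself. *)
Lemma wpp_sub_component f y : wpp f -> (0 < f y)%N ->
  wpp (f - mset (component le [set i | 0 < f i]%N y))%MM.
Proof.
move=> wf fy; set S := [set i | 0 < f i]%N; set K := component le S y.
have yS : y \in S by rewrite inE.
have /order_idealP iK : order_ideal K by rewrite component_ideal ?order_ideal_support.
apply/wppP => a b pab; rewrite !mnmBE !msetE.
have fab : (f b <= f a)%N by move/wppP: wf; apply.
case bK : (b \in K); first by rewrite (iK a b (pltW pab) bK) leq_sub2r.
case aK : (a \in K); last by rewrite !subn0.
case: (posnP (f b)) => [-> // | fb]; suff : b \in K by rewrite bK.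
have bS : b \in S by rewrite inE.
move: aK; rewrite !inE fb /= => /andP[aS cya].
by apply: connect_trans cya (hconnect_le le_refl le_anti le_trans _ bS (pltW pab));
  rewrite order_ideal_support.
Qed.

Lemma phi_mnm_surj f : wpp f -> exists u, phi_mnm u = f.
Proof.
elim: {f}_.+1 {-2}f (ltnSn (mdeg f)) => // N IH f; rewrite ltnS => leN wf.
have [->|/mnm_pos[y fy]] := eqVneq f 0%MM; first by exists 0%MM; rewrite phi_mnm0.
set K := component le [set i | 0 < f i]%N y.
have yS : y \in [set i | 0 < f i]%N by rewrite inE.
have [i Ki] := cideal_surj (component_conn_ideal le_refl le_anti le_trans
  (order_ideal_support wf) yS).
have Kf : (mset K <= f)%MM.
  apply/mnm_lepP => j; rewrite msetE; case jK : (j \in K) => //.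
  by have := subsetP (component_sub _ _ _) j jK; rewrite inE.
have [v Ev] : exists v, phi_mnm v = (f - mset K)%MM.
  apply: IH (wpp_sub_component wf fy); apply: leq_trans leN.
  have -> : mdeg f = (mdeg (f - mset K) + #|K|)%N by rewrite -mdeg_mset -mdegD submK.
  rewrite -{1}[mdeg _]addn0 ltn_add2l card_gt0.
  by apply/set0Pn; exists y; apply: mem_component.
by exists (v + U_(i))%MM; rewrite phi_mnmD phi_mnm1 Ev Ki submK.
Qed.

End ExponentVectors.

Section PDegree.
Variables (n : nat) (le : rel 'I_n).
Hypotheses (le_refl : reflexive le) (le_anti : antisymmetric le)
  (le_trans : transitive le).
Implicit Types (J : {set 'I_n}) (f g : 'X_{1..n}).

Local Notation wpp := (wpp le).
Local Notation phi_mnm := (@phi_mnm n le).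
Local Notation phi_mnm_surj := (phi_mnm_surj le_refl le_anti le_trans).

Local Open Scope ring_scope.

Definition wdeg f : int := \sum_(i < n) (f i)%:Z * weight le i.
Definition pdeg f : nat := `|wdeg f|%N.

Lemma wdegD f g : wdeg (f + g)%MM = wdeg f + wdeg g.
Proof.
by rewrite /wdeg -big_split; apply: eq_bigr => i _; rewrite mnmDE PoszD mulrDl.
Qed.

Lemma wdeg0 : wdeg 0%MM = 0.
Proof. by rewrite /wdeg big1 // => i _; rewrite mnm0E mul0r. Qed.

Lemma wdegMn f k : wdeg (f *+ k)%MM = wdeg f *+ k.
Proof. by elim: k => [|k IHk]; rewrite ?mulm0n ?wdeg0 // mulmS wdegD IHk mulrS. Qed.

Lemma wdeg_mset J : wdeg (mset J) = weight_sum le J.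
Proof.
rewrite /wdeg /weight_sum [RHS]big_mkcond; apply: eq_bigr => i _ /=.
by rewrite msetE; case: (i \in J); rewrite ?mul1r ?mul0r.
Qed.

Lemma pdeg0 : pdeg 0%MM = 0%N.
Proof. by rewrite /pdeg wdeg0. Qed.

Lemma mdeg_le_phi_mnm u : (mdeg u <= mdeg (phi_mnm u))%N.
Proof.
rewrite /phi_mnm mdeg_sum mdegE; apply: leq_sum => i _.
rewrite mdegMn mdeg_mset -{1}[u i]mul1n leq_mul2r card_gt0 orbC.
by case/and3P: (cideal_conn_ideal i) => ->.
Qed.

Hypothesis meet_connected : forall J1 J2, conn_ideal le J1 -> conn_ideal le J2 ->
  intersect_nontriv J1 J2 -> hasse_connected le (J1 :&: J2).

Lemma wdeg_phi_mnm u : wdeg (phi_mnm u) = (mdeg u)%:Z.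
Proof.
rewrite /phi_mnm (big_morph wdeg wdegD wdeg0) mdegE.
rewrite (big_morph Posz PoszD (erefl 0%:Z)); apply: eq_bigr => i _.
by rewrite wdegMn wdeg_mset weight_sum_conn_ideal ?natz ?cideal_conn_ideal.
Qed.

Lemma pdeg_phi_mnm u : pdeg (phi_mnm u) = mdeg u.
Proof. by rewrite /pdeg wdeg_phi_mnm. Qed.

Lemma pdegD f g : wpp f -> wpp g -> pdeg (f + g)%MM = (pdeg f + pdeg g)%N.
Proof.
move=> /phi_mnm_surj[u <-] /phi_mnm_surj[v <-].
by rewrite -phi_mnmD !pdeg_phi_mnm mdegD.
Qed.

Lemma pdeg_eq0 f : wpp f -> (pdeg f == 0%N) = (f == 0%MM).
Proof.
move=> /phi_mnm_surj[u <-]; rewrite pdeg_phi_mnm mdeg_eq0.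
apply/eqP/eqP => [->|u0]; first exact: phi_mnm0.
by apply/eqP; rewrite -mdeg_eq0 -pdeg_phi_mnm u0 pdeg0.
Qed.

Lemma pdeg_le_mdeg f : wpp f -> (pdeg f <= mdeg f)%N.
Proof.
by move=> /phi_mnm_surj[u <-]; rewrite pdeg_phi_mnm mdeg_le_phi_mnm.
Qed.

End PDegree.

Section UnionIntersection.
Variables (n : nat) (le : rel 'I_n).
Hypotheses (le_refl : reflexive le) (le_anti : antisymmetric le)
  (le_trans : transitive le).
Implicit Types (D J : {set 'I_n}).

Local Notation order_ideal := (order_ideal le).

Lemma order_idealI J1 J2 : order_ideal J1 -> order_ideal J2 -> order_ideal (J1 :&: J2).
Proof.
move=> /order_idealP i1 /order_idealP i2; apply/order_idealP => a b lab.
by rewrite !inE => /andP[b1 b2]; rewrite (i1 a b lab b1) (i2 a b lab b2).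
Qed.

Lemma order_idealU J1 J2 : order_ideal J1 -> order_ideal J2 -> order_ideal (J1 :|: J2).
Proof.
move=> /order_idealP i1 /order_idealP i2; apply/order_idealP => a b lab.
by rewrite !inE => /orP[b1|b2]; rewrite ?(i1 a b lab b1) ?(i2 a b lab b2) ?orbT.
Qed.

Lemma conn_idealU J1 J2 : conn_ideal le J1 -> conn_ideal le J2 ->
  ~~ [disjoint J1 & J2] -> conn_ideal le (J1 :|: J2).
Proof.
move=> /and3P[_ i1 /hasse_connectedP c1] /and3P[_ i2 /hasse_connectedP c2].
rewrite -setI_eq0 => /set0Pn[c /setIP[c1J c2J]].
rewrite /conn_ideal order_idealU //=; apply/andP; split.
  by apply/set0Pn; exists c; rewrite inE c1J.
have to_c a : a \in J1 :|: J2 -> connect (hasse_on le (J1 :|: J2)) a c.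
  case/setUP => [aJ | aJ]; [apply: (hconnect_subset (subsetUl J1 J2)) (c1 _ _ aJ c1J)
                            | apply: (hconnect_subset (subsetUr J1 J2)) (c2 _ _ aJ c2J)].
apply/hasse_connectedP => a b aJ bJ.
by apply: connect_trans (to_c a aJ) _; rewrite hconnect_sym to_c.
Qed.

Lemma mset_setUI J1 J2 : (mset J1 + mset J2 = mset (J1 :|: J2) + mset (J1 :&: J2))%MM.
Proof.
by apply/mnmP => i; rewrite !mnmDE !msetE !inE; case: (i \in J1); case: (i \in J2).
Qed.

Lemma mset_disconnected D : order_ideal D -> ~~ hasse_connected le D ->
  exists C D', [/\ conn_ideal le C, order_ideal D', D' != set0 &
                   mset D = (mset C + mset D')%MM].
Proof.
move=> iD; rewrite negb_forall_in => /existsP[a /andP[aD]].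
rewrite negb_forall_in => /existsP[b /andP[bD nab]].
exists (component le D a), (D :\: component le D a); split.
- exact: component_conn_ideal.
- apply/order_idealP => x y lxy; rewrite !inE => /andP[nyC yD].
  have xD : x \in D by move/order_idealP: iD => /(_ x y lxy yD).
  rewrite xD andbT; apply: contra nyC => /andP[_ cax].
  by rewrite yD (connect_trans cax) ?hconnect_le.
- by apply/set0Pn; exists b; rewrite !inE bD andbT; apply: contra nab => /andP[].
apply/mnmP => i; rewrite mnmDE !msetE !inE.
by case: (i \in D); case: (connect _ a i).
Qed.

End UnionIntersection.

Local Open Scope ring_scope.

Section SupportedPolynomials.
Variables (N : nat) (R : comNzRingType).
Implicit Types (p q : {mpoly R[N]}) (P Q : pred 'X_{1..N}).

Definition supported P p := forall m, ~~ P m -> p@_m = 0.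

Lemma supportedP P p : supported P p <-> {subset msupp p <= P}.
Proof.
split=> sp m; first by rewrite mcoeff_msupp; apply: contraNT => /sp ->; rewrite eqxx.
by apply: contraNeq => p_m; apply: sp; rewrite mcoeff_msupp.
Qed.

Lemma supported_sub P Q p : {subset P <= Q} -> supported P p -> supported Q p.
Proof. by move=> PQ sp m nQm; apply: sp; apply: contra nQm; apply: PQ. Qed.

Lemma supportedD P p q : supported P p -> supported P q -> supported P (p + q).
Proof. by move=> sp sq m nPm; rewrite mcoeffD sp // sq // addr0. Qed.

Lemma supportedZ P c p : supported P p -> supported P (c *: p).
Proof. by move=> sp m nPm; rewrite mcoeffZ sp // mulr0. Qed.

Lemma supported_sum P (I : eqType) (r : seq I) (F : I -> {mpoly R[N]}) :
  (forall i, i \in r -> supported P (F i)) -> supported P (\sum_(i <- r) F i).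
Proof.
by move=> sF m nPm; rewrite raddf_sum big_seq big1 // => i ir; apply: sF.
Qed.

Lemma supportedX P c m : P m -> supported P (c *: 'X_[m]).
Proof.
move=> Pm m' nPm'; rewrite mcoeffZ mcoeffX.
by case: eqP => [e | _]; [rewrite -e Pm in nPm' | rewrite mulr0].
Qed.

Lemma supportedM P Q (T : pred 'X_{1..N}) p q :
  (forall a b, P a -> Q b -> T (a + b)%MM) ->
  supported P p -> supported Q q -> supported T (p * q).
Proof.
move=> PQT /supportedP sp /supportedP sq; apply/supportedP => m /msuppM_le /allpairsP.
by case=> -[a b] /= [ap bq ->]; apply: PQT; [apply: sp | apply: sq].
Qed.

Lemma supported_span P p : supported P p <->
  exists s : seq (R * 'X_{1..N}),
    (forall x, x \in s -> P x.2) /\ p = \sum_(x <- s) x.1 *: 'X_[x.2].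
Proof.
split=> [/supportedP sp | [s [sP ->]]]; last first.
  by apply: supported_sum => x /sP; apply: supportedX.
exists [seq (p@_m, m) | m <- msupp p]; split; last by rewrite big_map -mpolyE.
by move=> _ /mapP[m mp ->]; apply: sp.
Qed.

Definition mrestr P p := \sum_(m <- msupp p | P m) p@_m *: 'X_[m].

Lemma mrestrE P p m : (mrestr P p)@_m = if P m then p@_m else 0.
Proof.
rewrite /mrestr raddf_sum /= big_mkcond /=.
under eq_bigr do rewrite mcoeffZ mcoeffX.
have [mp|mNp] := boolP (m \in msupp p).
  rewrite (bigD1_seq m) ?msupp_uniq //= eqxx mulr1 big1 ?addr0 // => m' nm'.
  by rewrite (negbTE nm') mulr0 if_same.
rewrite big_seq big1 => [|m' m'p]; first by rewrite memN_msupp_eq0 // if_same.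
by case: eqP => [e | _]; [rewrite -e m'p in mNp | rewrite mulr0 if_same].
Qed.

Lemma mrestr_is_linear P : linear (mrestr P).
Proof.
move=> c p q; apply/mpolyP => m.
by rewrite mcoeffD mcoeffZ !mrestrE mcoeffD mcoeffZ; case: (P m); rewrite ?mulr0 ?addr0.
Qed.

HB.instance Definition _ P :=
  GRing.isLinear.Build R {mpoly R[N]} {mpoly R[N]} _ (mrestr P) (mrestr_is_linear P).

Lemma mrestr_sum P (I : Type) (r : seq I) (F : I -> {mpoly R[N]}) :
  mrestr P (\sum_(i <- r) F i) = \sum_(i <- r) mrestr P (F i).
Proof. exact: raddf_sum. Qed.

Lemma mrestrX P m : mrestr P 'X_[m] = if P m then 'X_[m] else 0.
Proof.
apply/mpolyP => m'; rewrite mrestrE (fun_if (mcoeff m')) mcoeffX mcoeff0.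
by case: eqP => [<-|_]; case: (P m) => //; rewrite if_same.
Qed.

Lemma supported_mrestr P Q p : supported Q p -> supported (predI P Q) (mrestr P p).
Proof. by move=> sp m; rewrite mrestrE /= negb_and; case: (P m) => //= /sp. Qed.

End SupportedPolynomials.

(* Keeps [phi] and [hcomp] folded when [/=] unfolds the canonical morphism
   structures declared below. *)
Arguments Defs.phi : simpl never.
Arguments Defs.hcomp : simpl never.

Section Presentation.
Variables (n : nat) (le : rel 'I_n) (k : fieldType).

Local Notation ncid := (ncid le).
Local Notation phi := (@phi n le k).
Local Notation hcomp := (@hcomp n le k).
Local Notation inIP := (@inIP n le k).
Local Notation inIgr := (@inIgr n le k).
Local Notation grphi := (@grphi n le k).
Local Notation inMpow := (@inMpow n le k).

HB.instance Definition _ := GRing.RMorphism.copy phi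
  (mmap (@mpolyC n k) (fun i : 'I_ncid => \prod_(j in nth set0 (cideals le) i) 'X_j)).

HB.instance Definition _ d := GRing.Linear.copy (hcomp d)
  (pihomog (Measure.clone _ mdeg _) d).

Lemma phiZ c q : phi (c *: q) = c *: phi q.
Proof. by rewrite /phi mmapZ mul_mpolyC. Qed.

Lemma phiX u : phi 'X_[u] = 'X_[phi_mnm u].
Proof.
rewrite /phi mmapX /mmap1 /phi_mnm.
rewrite (big_morph (fun m => 'X_[m] : {mpoly k[n]}) (@mpolyXD _ _) (@mpolyX0 _ _)).
by apply: eq_bigr => i _; rewrite mset_sum -mpolyXn
  (big_morph (fun m => 'X_[m] : {mpoly k[n]}) (@mpolyXD _ _) (@mpolyX0 _ _)).
Qed.

Lemma hcompX d u : hcomp d 'X_[u] = if mdeg u == d then 'X_[u] else 0.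
Proof. exact: pihomogX. Qed.

Lemma hcomp_msize d q : (msize q <= d)%N -> hcomp d q = 0.
Proof.
move=> hq; rewrite /hcomp pihomogE big_seq_cond big1 // => m /andP[mq /eqP md].
by move: (msize_mdeg_lt mq); rewrite /= in md; rewrite md ltnNge hq.
Qed.

Lemma hcomp_id e d q : hcomp e (hcomp d q) = if e == d then hcomp d q else 0.
Proof.
case: eqP => [->|/eqP ned]; first by rewrite /hcomp pihomog_id.
by apply: (pihomog_ne0 (d := d)); [rewrite eq_sym | apply: pihomogP].
Qed.

Lemma nth_grphi q d : nth 0 (grphi q) d = phi (hcomp d q).
Proof.
rewrite /grphi; case: (ltnP d (msize q)) => hd; first by rewrite nth_mkseq.
by rewrite nth_default ?size_mkseq // hcomp_msize // raddf0.
Qed.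

Lemma inIgrP q : inIgr q <-> forall d, inMpow d.+1 (phi (hcomp d q)).
Proof. by split=> Iq d; move: (Iq d); rewrite /gr_eq nth_grphi nth_nil subr0. Qed.

Lemma inMpow0 d : inMpow d 0.
Proof. by case: d => [|d]; exists [::]; rewrite big_nil. Qed.

Lemma homog_IP_of_Igr_eq : (forall q, inIgr q <-> inIP q) ->
  forall q, inIP q -> forall d, inIP (hcomp d q).
Proof.
move=> Igr_IP q /Igr_IP /inIgrP Iq d; apply/Igr_IP/inIgrP => e.
by rewrite hcomp_id; case: eqP => [->|_]; [apply: Iq | rewrite raddf0; apply: inMpow0].
Qed.

Lemma gr_eq_nth (a b : seq {mpoly k[n]}) :
  (forall d, nth 0 a d = nth 0 b d) -> gr_eq le a b.
Proof. by move=> ab d; rewrite ab subrr; apply: inMpow0. Qed.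

Lemma nth_gr_add (a b : seq {mpoly k[n]}) d :
  nth 0 (gr_add a b) d = nth 0 a d + nth 0 b d.
Proof.
rewrite /gr_add; have [lt_d | le_d] := ltnP d (maxn (size a) (size b)).
  by rewrite nth_mkseq.
rewrite nth_default ?size_mkseq // !nth_default ?addr0 //.
  by apply: leq_trans le_d; rewrite leq_maxr.
by apply: leq_trans le_d; rewrite leq_maxl.
Qed.

Lemma nth_gr_scale c (a : seq {mpoly k[n]}) d :
  nth 0 (gr_scale c a) d = c *: nth 0 a d.
Proof.
rewrite /gr_scale; have [lt_d | le_d] := ltnP d (size a); first by rewrite (nth_map 0).
by rewrite !nth_default ?size_map // scaler0.
Qed.

Lemma nth_gr_mul (a b : seq {mpoly k[n]}) d :
  nth 0 (gr_mul a b) d = \sum_(i < d.+1) nth 0 a i * nth 0 b (d - i).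
Proof.
rewrite /gr_mul; have [lt_d | le_d] := ltnP d (size a + size b).
  by rewrite nth_mkseq.
rewrite nth_default ?size_mkseq // big1 // => i _.
have [lt_i | le_i] := ltnP i (size a); last by rewrite nth_default ?mul0r.
rewrite [nth 0 b _]nth_default ?mulr0 //; case: i lt_i => /= i _; lia.
Qed.

Lemma nth_gr_one d : nth 0 (gr_one n k) d = if d == 0%N then 1 else 0.
Proof. by case: d => [|[|d]]. Qed.

(* [U^u - U^v] lies in [I_P], hence so does its homogeneous part of degree
   [mdeg u], which is [U^u] unless [mdeg v = mdeg u]. *)
Lemma mdeg_phi_mnm_fiber : (forall q, inIP q -> forall d, inIP (hcomp d q)) ->
  forall u v : 'X_{1..ncid}, phi_mnm u = phi_mnm v -> mdeg u = mdeg v.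
Proof.
move=> homIP u v euv; apply/eqP; apply: contraT => nuv.
have /homIP/(_ (mdeg u)) : inIP ('X_[u] - 'X_[v]).
  by rewrite /inIP raddfB /= !phiX euv subrr.
rewrite /inIP (raddfB (hcomp _)) /= !hcompX eqxx eq_sym (negbTE nuv) subr0 phiX.
move/(congr1 (mcoeff (phi_mnm u))); rewrite mcoeffX eqxx mcoeff0.
by move/eqP; rewrite oner_eq0.
Qed.

Hypotheses (le_refl : reflexive le) (le_anti : antisymmetric le)
  (le_trans : transitive le).

(* If [J1 :&: J2] splits off a component [C], leaving a nonempty ideal [D'],
   then [U_J1 U_J2] and [U_(J1 :|: J2) U_C U^v] with [phi_mnm v = mset D']
   have the same image but different degrees. *)
Lemma meet_connected_of_homog_IP :
  (forall q, inIP q -> forall d, inIP (hcomp d q)) ->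
  forall J1 J2 : {set 'I_n}, conn_ideal le J1 -> conn_ideal le J2 ->
  intersect_nontriv J1 J2 -> hasse_connected le (J1 :&: J2).
Proof.
move=> homIP J1 J2 c1 c2 /and3P[nd _ _]; apply: contraT => nc.
have [i1 i2] : order_ideal le J1 /\ order_ideal le J2.
  by case/and3P: c1 => _ -> _; case/and3P: c2.
have [C [D' [cC iD' nD' eD]]] := mset_disconnected le_refl le_anti le_trans
  (order_idealI i1 i2) nc.
have [j1 e1] := cideal_surj c1; have [j2 e2] := cideal_surj c2.
have [jC eC] := cideal_surj cC; have [jU eU] := cideal_surj (conn_idealU c1 c2 nd).
have [v ev] := phi_mnm_surj le_refl le_anti le_trans (wpp_mset iD').
have := mdeg_phi_mnm_fiber homIP
  (u := (U_(j1) + U_(j2))%MM) (v := (U_(jU) + U_(jC) + v)%MM).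
rewrite !phi_mnmD !phi_mnm1 e1 e2 eU eC ev mset_setUI eD addmA => /(_ erefl).
rewrite !mdegD !mdeg1 -[LHS]addn0 => /eqP; rewrite eqn_add2l eq_sym mdeg_eq0.
by move=> /eqP v0; move: nD'; rewrite -cards_eq0 -mdeg_mset -ev v0 phi_mnm0 mdeg0.
Qed.

End Presentation.

Section MeetConnected.
Variables (n : nat) (le : rel 'I_n) (k : fieldType).
Hypotheses (le_refl : reflexive le) (le_anti : antisymmetric le)
  (le_trans : transitive le).
Hypothesis meet_connected : forall J1 J2, conn_ideal le J1 -> conn_ideal le J2 ->
  intersect_nontriv J1 J2 -> hasse_connected le (J1 :&: J2).
Implicit Types (p r : {mpoly k[n]}) (q : {mpoly k[ncid le]}) (f g : 'X_{1..n}).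

Local Notation wpp := (wpp le).
Local Notation pdeg := (pdeg le).
Local Notation phi := (@phi n le k).
Local Notation hcomp := (@hcomp n le k).
Local Notation inRP := (@inRP n le k).
Local Notation inM := (@inM n le k).
Local Notation inMpow := (@inMpow n le k).
Local Notation inIP := (@inIP n le k).
Local Notation inIgr := (@inIgr n le k).
Local Notation phi_mnm_surj := (phi_mnm_surj le_refl le_anti le_trans).
Local Notation pdeg_phi_mnm := (pdeg_phi_mnm le_refl le_anti le_trans meet_connected).
Local Notation pdegD := (pdegD le_refl le_anti le_trans meet_connected).
Local Notation pdeg_eq0 := (pdeg_eq0 le_refl le_anti le_trans meet_connected).

Definition pdeg_ge d := [pred f | wpp f && (d <= pdeg f)%N].

Lemma supported_pdeg_ge0 d p : supported (pdeg_ge d) p -> supported (pdeg_ge 0) p.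
Proof. by apply: supported_sub => f /andP[wf _]; rewrite inE wf. Qed.

Lemma inRP_supported p : inRP p <-> supported (pdeg_ge 0) p.
Proof.
rewrite supported_span; split=> -[s [ws ->]]; exists s; split=> // x /ws.
  by rewrite inE andbT.
by case/andP.
Qed.

Lemma inM_supported p : inM p <-> supported (pdeg_ge 1) p.
Proof.
rewrite supported_span; split=> -[s [ws ->]]; exists s; split=> // x /ws.
  by case=> wx nx; rewrite inE wx lt0n pdeg_eq0.
by case/andP=> wx; rewrite lt0n pdeg_eq0.
Qed.

Lemma pdeg_ge_split d f : pdeg_ge d.+1 f ->
  exists a b, [/\ pdeg_ge 1 a, pdeg_ge d b & f = (a + b)%MM].
Proof.
case/andP=> /phi_mnm_surj[u <-]; rewrite pdeg_phi_mnm => du.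
have [i ui] : exists i : 'I_(ncid le), (0 < u i)%N.
  by apply: mnm_pos; rewrite -mdeg_eq0 -lt0n; apply: leq_trans du.
have Uu : (U_(i) <= u)%MM.
  by apply/mnm_lepP => j; rewrite mnm1E; case: eqP => // <-.
exists (phi_mnm U_(i)), (phi_mnm (u - U_(i))); split.
- by rewrite inE wpp_phi_mnm pdeg_phi_mnm mdeg1.
- have := mdegD U_(i) (u - U_(i)); rewrite addmC submK // mdeg1 add1n => eu.
  by rewrite inE wpp_phi_mnm pdeg_phi_mnm -ltnS -eu.
by rewrite -phi_mnmD addmC submK.
Qed.

Lemma inMpowD d p r : inMpow d p -> inMpow d r -> inMpow d (p + r).
Proof.
case: d => [|d].
  by move=> /inRP_supported sp /inRP_supported sr; apply/inRP_supported/supportedD.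
case=> s [sM ->] [t [tM ->]]; exists (s ++ t); split; last by rewrite big_cat.
by move=> x; rewrite mem_cat => /orP[]; [apply: sM | apply: tM].
Qed.

Lemma inMpow_sum d (I : eqType) (r : seq I) (F : I -> {mpoly k[n]}) :
  (forall i, i \in r -> inMpow d (F i)) -> inMpow d (\sum_(i <- r) F i).
Proof.
elim: r => [|i r IHr] rM; first by rewrite big_nil; apply: inMpow0.
rewrite big_cons; apply: inMpowD; first by apply: rM; rewrite mem_head.
by apply: IHr => j jr; apply: rM; rewrite in_cons jr orbT.
Qed.

Lemma inMpow_supported d p : inMpow d p <-> supported (pdeg_ge d) p.
Proof.
elim: d p => [|d IHd] p; first exact: inRP_supported.
split=> [[s [sM ->]] | /supportedP sp].
  apply: supported_sum => x /sM[/inM_supported x1 /IHd x2].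
  apply: (supportedM _ x1 x2) => a b /andP[wa da] /andP[wb db].
  by rewrite inE wppD //= pdegD // -add1n leq_add.
rewrite (mpolyE p); apply: inMpow_sum => m /sp /pdeg_ge_split[a [b [a1 bd ->]]].
exists [:: (p@_(a + b)%MM *: 'X_[a], 'X_[b])]; split; last first.
  by rewrite big_seq1 /= -scalerAl -mpolyXD.
move=> x /[1!inE] /eqP -> /=; split; first exact/inM_supported/supportedX.
by apply/IHd; rewrite -['X_[b]]scale1r; apply: supportedX.
Qed.

Local Notation pcomp d := (mrestr [pred f | pdeg f == d]).

Lemma phi_hcomp d q : phi (hcomp d q) = pcomp d (phi q).
Proof.
rewrite [q]mpolyE (raddf_sum (hcomp d)) /= (raddf_sum phi) /= (raddf_sum phi) /=.
rewrite (raddf_sum (pcomp d)) /=; apply: eq_bigr => u _.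
rewrite [hcomp d _]linearZ /= hcompX !phiZ [pcomp d _]linearZ /= phiX mrestrX /=.
by rewrite pdeg_phi_mnm; case: eqP => _; rewrite ?phiX ?raddf0.
Qed.

Lemma Igr_eq_IP q : inIgr q <-> inIP q.
Proof.
rewrite inIgrP; split=> [Iq | phiq0 d]; last first.
  by rewrite phi_hcomp phiq0 raddf0; apply: inMpow0.
apply/mpolyP => f; rewrite mcoeff0.
have /inMpow_supported := Iq (pdeg f); rewrite phi_hcomp => /(_ f).
by rewrite mrestrE /= eqxx; apply; rewrite /= ltnn andbF.
Qed.

Lemma pcomp_supported d p :
  supported (pdeg_ge 0) p -> supported (pdeg_ge d) (pcomp d p).
Proof.
move=> sp; apply: (supported_sub _ (supported_mrestr sp)) => f.
by case/andP=> /= /eqP <- /andP[wf _]; rewrite inE wf leqnn.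
Qed.

Lemma pcomp_homog d e r :
  supported [pred f | pdeg f == e] r -> pcomp d r = if e == d then r else 0.
Proof.
move=> sr; apply/mpolyP => f; rewrite mrestrE /=.
have [<- | ned] := eqVneq e d.
  by case: eqP => // /eqP nfe; rewrite sr.
by case: eqP => [fd | _]; rewrite mcoeff0 // sr //= fd eq_sym.
Qed.

Lemma pcomp_pcomp i j p : pcomp i (pcomp j p) = if j == i then pcomp j p else 0.
Proof. by apply: pcomp_homog => f; rewrite mrestrE /=; case: eqP. Qed.

Lemma pcomp_msize d p : supported (pdeg_ge 0) p -> (msize p <= d)%N -> pcomp d p = 0.
Proof.
move=> /supportedP sp le_pd; apply/mpolyP => f; rewrite mrestrE mcoeff0 /=.
case: eqP => // fd; apply/memN_msupp_eq0/negP => fp; have /andP[wf _] := sp f fp.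
have := leq_ltn_trans (pdeg_le_mdeg le_refl le_anti le_trans meet_connected wf)
  (msize_mdeg_lt fp).
by rewrite fd ltnNge le_pd.
Qed.

Lemma pcomp_sum M p : supported (pdeg_ge 0) p -> (msize p <= M)%N ->
  p = \sum_(i < M) pcomp i p.
Proof.
move=> sp le_pM; apply/mpolyP => f; rewrite raddf_sum /=.
under eq_bigr do rewrite mrestrE /=.
have [lt_fM | le_Mf] := ltnP (pdeg f) M.
  rewrite (bigD1 (Ordinal lt_fM)) //= eqxx big1 ?addr0 // => i ni.
  by case: eqP => // fi; case/eqP: ni; apply: val_inj.
rewrite big1 => [|i _]; last first.
  by case: eqP => // fi; move: (ltn_ord i); rewrite -fi ltnNge le_Mf.
have := congr1 (mcoeff f) (pcomp_msize sp (leq_trans le_pM le_Mf)).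
by rewrite mrestrE /= eqxx mcoeff0.
Qed.

Lemma pcompM_homog d i j p r : supported (pdeg_ge 0) p -> supported (pdeg_ge 0) r ->
  pcomp d (pcomp i p * pcomp j r) = if (i + j == d)%N then pcomp i p * pcomp j r else 0.
Proof.
move=> sp sr; apply: pcomp_homog.
apply: (supportedM _ (supported_mrestr sp) (supported_mrestr sr)) => a b.
move=> /andP[/= /eqP <- /andP[wa _]] /andP[/= /eqP <- /andP[wb _]].
by rewrite /= pdegD.
Qed.

Lemma pcompM d p r : supported (pdeg_ge 0) p -> supported (pdeg_ge 0) r ->
  pcomp d (p * r) = \sum_(i < d.+1) pcomp i p * pcomp (d - i)%N r.
Proof.
move=> sp sr; set M := (d + msize p + msize r).+1.
have le_pM : (msize p <= M)%N by rewrite /M; lia.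
have le_rM : (msize r <= M)%N by rewrite /M; lia.
have le_dM : (d.+1 <= M)%N by rewrite /M; lia.
rewrite {1}(pcomp_sum sp le_pM) {1}(pcomp_sum sr le_rM) mulr_suml mrestr_sum.
under eq_bigr do rewrite mulr_sumr mrestr_sum.
under eq_bigr do under eq_bigr do rewrite pcompM_homog //.
rewrite (big_ord_widen M (fun i => pcomp i p * pcomp (d - i)%N r) le_dM) big_mkcond /=.
rewrite [RHS]big_mkcond; apply: eq_bigr => i _; have [lt_id | le_di] := ltnP i d.+1.
  have lt_diM : (d - i < M)%N by move: le_dM; lia.
  rewrite -big_mkcond (big_pred1 (Ordinal lt_diM)) //= => j.
  rewrite /= -[RHS]/(val j == d - i)%N; apply/idP/idP => [/eqP <- | /eqP ->].
    by rewrite addKn.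
  by rewrite subnKC.
by rewrite big1 // => j _; case: eqP => // e; move: le_di; rewrite -e; lia.
Qed.

Lemma supported_subr_pcomp d p :
  supported (pdeg_ge d) p -> supported (pdeg_ge d.+1) (p - pcomp d p).
Proof.
move=> sp f; rewrite mcoeffB mrestrE /=.
case: eqP => [_ | /eqP nfd]; first by rewrite subrr.
rewrite subr0 negb_and -ltnNge ltnS => nf; apply: sp; rewrite /= negb_and -ltnNge.
by case/orP: nf => [-> // | le_fd]; rewrite ltn_neqAle nfd le_fd orbT.
Qed.

Lemma pcomp1 d : pcomp d (1 : {mpoly k[n]}) = if d == 0%N then 1 else 0.
Proof. by rewrite -mpolyX0 mrestrX /= pdeg0 eq_sym. Qed.

Definition gr_of p := mkseq (fun d => pcomp d p) (msize p).

Lemma nth_gr_of p d : supported (pdeg_ge 0) p -> nth 0 (gr_of p) d = pcomp d p.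
Proof.
move=> sp; rewrite /gr_of; have [lt_d | le_d] := ltnP d (msize p).
  by rewrite nth_mkseq.
by rewrite nth_default ?size_mkseq // pcomp_msize.
Qed.

Lemma gr_of_inj p r : inRP p -> inRP r -> gr_eq le (gr_of p) (gr_of r) -> p = r.
Proof.
move=> /inRP_supported sp /inRP_supported sr pr; apply/eqP; rewrite -subr_eq0.
apply/eqP/mpolyP => f; rewrite mcoeff0.
have /inMpow_supported := pr (pdeg f); rewrite !nth_gr_of // => /(_ f).
by rewrite mcoeffB !mrestrE /= eqxx -mcoeffB; apply; rewrite /= ltnn andbF.
Qed.

(* The preimage of representatives [a_d] of [m^d / m^(d+1)] is the sum of the
   P-degree [d] parts of the [a_d]. *)
Lemma gr_of_surj a : gr_valid le a -> exists2 p, inRP p & gr_eq le (gr_of p) a.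
Proof.
move=> va; have sa d : supported (pdeg_ge d) (nth 0 a d) by apply/inMpow_supported.
set p := \sum_(d < size a) pcomp d (nth 0 a d).
have sp : supported (pdeg_ge 0) p.
  apply: supported_sum => d _.
  exact/supported_pdeg_ge0/pcomp_supported/supported_pdeg_ge0/sa.
exists p; first exact/inRP_supported.
move=> e; rewrite nth_gr_of // mrestr_sum.
under eq_bigr do rewrite pcomp_pcomp.
have [lt_ea | le_ae] := ltnP e (size a); last first.
  rewrite big1 => [|d _]; last first.
    by case: eqP => // de; move: (ltn_ord d); rewrite de ltnNge le_ae.
  by rewrite sub0r nth_default // oppr0; apply: inMpow0.
rewrite -big_mkcond (big_pred1 (Ordinal lt_ea)) => [|d]; last first.
  by rewrite /= eq_sym; apply/eqP/eqP => [ed | ->]; [apply: val_inj | ].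
rewrite -opprB; apply/inMpow_supported => f nf; rewrite mcoeffN.
by rewrite (supported_subr_pcomp (sa e)) ?oppr0.
Qed.

Lemma gr_iso : gr_iso_RP le k.
Proof.
exists gr_of; split; [|split; [|split; [|split; [|split; [|split]]]]].
- move=> p /inRP_supported sp d; rewrite nth_gr_of //.
  exact/inMpow_supported/pcomp_supported.
- move=> p r /inRP_supported sp /inRP_supported sr; apply: gr_eq_nth => d.
  by rewrite nth_gr_add !nth_gr_of ?raddfD //; apply: supportedD.
- move=> c p /inRP_supported sp; apply: gr_eq_nth => d.
  by rewrite nth_gr_scale !nth_gr_of ?linearZ //; apply: supportedZ.
- move=> p r /inRP_supported sp /inRP_supported sr; apply: gr_eq_nth => d.
  rewrite nth_gr_mul nth_gr_of ?pcompM //.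
    by apply: eq_bigr => i _; rewrite !nth_gr_of.
  by apply: (supportedM _ sp sr) => f g /andP[wf _] /andP[wg _]; rewrite inE wppD.
- apply: gr_eq_nth => d; rewrite nth_gr_one nth_gr_of ?pcomp1 //.
  by rewrite -(scale1r 1) -mpolyX0; apply: supportedX; rewrite inE wpp0.
- exact: gr_of_inj.
exact: gr_of_surj.
Qed.

End MeetConnected.

Theorem corollary6p5 (k : fieldType) (n : nat) (le : rel 'I_n)
  (le_refl : reflexive le) (le_anti : antisymmetric le) (le_trans : transitive le) :
  let condi := (forall q : {mpoly k[ncid le]}, inIgr q <-> inIP q)
               /\ gr_iso_RP le k in
  let condii := forall q : {mpoly k[ncid le]},
                  inIP q -> forall d, inIP (hcomp d q) in
  let condiii := forall J1 J2 : {set 'I_n},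
                  conn_ideal le J1 -> conn_ideal le J2 ->
                  intersect_nontriv J1 J2 -> hasse_connected le (J1 :&: J2) in
  (condi <-> condii) /\ (condii <-> condiii).
Proof.
move=> condi condii condiii.
have i_ii : condi -> condii by case=> Igr_IP _; apply: homog_IP_of_Igr_eq.
have ii_iii : condii -> condiii := meet_connected_of_homog_IP le_refl le_anti le_trans.
have iii_i : condiii -> condi.
  move=> mc; split; first exact: Igr_eq_IP le_refl le_anti le_trans mc.
  exact: gr_iso le_refl le_anti le_trans mc.
by split; split; auto.
Qed.
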